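(* Consider an RBM with observed variables $X\in\{-1,1\}^n$ as in the context, with parameter $s$. Fix an observed variable $u$ and subsets $I,S\subseteq[n]$ such that $\{u\},I,S$ are pairwise disjoint, $I$ is nonempty, and $I$ is a subset of the MRF neighborhood of $u$. Fix any assignments $x_u\in\{-1,1\}$, $x_I\in\{-1,1\}^{|I|}$, $x_S\in\{-1,1\}^{|S|}$. Then there exists a subset $I'\subseteq I$ with $|I'|\le2^s$ such that \[\nu_{u,I'|S}(x_u,x_{I'}|x_S)\ge\frac{1}{4^{2^s}}\left(\frac{1}{|I|}\right)^{2^s(2^s+1)}\nu_{u,I|S}(x_u,x_I|x_S),\] where $x_{I'}$ is the restriction of $x_I$ to $I'$.
   Context: RBM: $\mathbb{P}(X=x,Y=y)\propto\exp(x^TJy+h^Tx+g^Ty)$ over observed $X\in\{-1,1\}^n$, latent $Y\in\{-1,1\}^m$, $J\in\mathbb{R}^{n\times m}$, $h\in\mathbb{R}^n$, $g\in\mathbb{R}^m$. The marginal of $X$ is $\propto\exp(f(x))$, $f(x)=\sum_j\rho(J_j\cdot x+g_j)+h^Tx$, $\rho(t)=\log(e^t+e^{-t})$, $J_j$ the $j$-th column; $f=\sum_{T\subseteq[n]}\hat f(T)\chi_T$, $\chi_T(x)=\prod_{i\in T}x_i$. MRF neighborhood of $u$: all $i\ne u$ with $\hat f(T)\ne0$ for some $T\ni u,i$. $s$: maximum over $u$ of the number of latent $j$ with $J_{i,j}\ne0$ for some $i$ in the MRF neighborhood of $u$. For disjoint $\{u\},I,S$: $\nu_{u,I|S}(x_u,x_I|x_S):=|\mathbb{P}(X_u=x_u,X_I=x_I|X_S=x_S)-\mathbb{P}(X_u=x_u|X_S=x_S)\mathbb{P}(X_I=x_I|X_S=x_S)|$,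 probabilities under the marginal of the RBM. *)

From HB Require Import structures.
From mathcomp Require Import all_boot all_order all_algebra.
From mathcomp Require Import reals sequences exp.
Set Implicit Arguments. Unset Strict Implicit. Unset Printing Implicit Defensive.
Import Order.TTheory GRing.Theory Num.Theory.
Local Open Scope ring_scope.

Section RBM.
Variables (R : realType) (n m : nat).
Variables (J : 'M[R]_(n, m)) (h : 'I_n -> R) (g : 'I_m -> R).

Definition spin (b : bool) : R := if b then 1 else -1.

Definition obs := {ffun 'I_n -> bool}.
Definition lat := {ffun 'I_m -> bool}.

Definition joint_w (x : obs) (y : lat) : R :=
  expR (\sum_(i < n) \sum_(j < m) spin (x i) * J i j * spin (y j)
        + \sum_(i < n) h i * spin (x i) + \sum_(j < m) g j * spin (y j)).

Definition marg_w (x : obs) : R := \sum_(y : lat) joint_w x y.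

Definition probA (A : {set 'I_n}) (sigma : obs) : R :=
  (\sum_(x : obs | [forall i in A, x i == sigma i]) marg_w x)
  / (\sum_(x : obs) marg_w x).

Definition condP (A S : {set 'I_n}) (sigma : obs) : R :=
  probA (A :|: S) sigma / probA S sigma.

(* nu_{u,I|S}(x_u, x_I | x_S), all assignments read off sigma *)
Definition nu (u : 'I_n) (I S : {set 'I_n}) (sigma : obs) : R :=
  `| condP (u |: I) S sigma - condP [set u] S sigma * condP I S sigma |.

Definition rho (t : R) : R := ln (expR t + expR (- t)).

Definition rbm_f (x : obs) : R :=
  \sum_(j < m) rho (\sum_(i < n) J i j * spin (x i) + g j)
  + \sum_(i < n) h i * spin (x i).

Definition fhat (T : {set 'I_n}) : R :=
  (2 ^+ n)^-1 * \sum_(x : obs) rbm_f x * \prod_(i in T) spin (x i).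

Definition mrf_nbr (u : 'I_n) : {set 'I_n} :=
  [set i | (i != u) &&
     [exists T : {set 'I_n}, [&& u \in T, i \in T & fhat T != 0]]].

Definition rbm_s : nat :=
  \max_(u : 'I_n) #|[set j : 'I_m | [exists i in mrf_nbr u, J i j != 0%R]]|.

End RBM.

From HB Require Import structures.
From mathcomp Require Import all_boot all_order all_algebra.
From mathcomp Require Import reals sequences exp ring lra zify.
Import Order.TTheory GRing.Theory Num.Theory.
Local Open Scope ring_scope.

(* Given the latent configuration y, the observed spins of an RBM are independent,
   and X_i = sigma_i has probability p_i(y).  Hence nu_{u,T|S} is the absolute value of
   the "moment" sum_y w(y) prod_{i in T} p_i(y), where w(y) is P(y | x_S) times
   (p_u(y) - E[p_u | x_S]).  For i in the MRF neighbourhood of u, p_i(y) depends only on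
   the at most s latent variables adjacent to that neighbourhood, so on I the weight w
   is carried by at most 2^s profiles.  Writing p_a = (p_a - p_a(y0)) + p_a(y0) removes
   one element a from I at the cost of one profile y0, since the new weight
   w (p_a - p_a(y0)) vanishes on that profile; induction on |I| then bounds the moment
   of I by (2|I|+1)^(2^s) times the largest moment of a subset of size < 2^s, and that
   factor is at most 4^(2^s) |I|^(2^s (2^s+1)). *)

Section Moments.
Context {R : realFieldType} {Y : finType} {n : nat} (q : 'I_n -> Y -> R).
Hypothesis q01 : forall i y, 0 <= q i y <= 1.

Definition moment (w : Y -> R) (T : {set 'I_n}) : R :=
  \sum_y w y * \prod_(i in T) q i y.

Definition profiled_by (A : {set Y}) (w : Y -> R) (I : {set 'I_n}) : Prop :=
  forall y, w y != 0 -> exists2 y', y' \in A & {in I, forall i, q i y = q i y'}.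

Lemma moment_profiled_by0 w I T : profiled_by set0 w I -> moment w T = 0.
Proof.
move=> w0; apply: big1 => y _.
have [->|/w0 [y']] := eqVneq (w y) 0; first by rewrite mul0r.
by rewrite inE.
Qed.

Lemma moment_setU1 w lam a (T : {set 'I_n}) : a \notin T ->
  moment w (a |: T) = moment (fun y => w y * (q a y - lam)) T + lam * moment w T.
Proof.
move=> aT; rewrite /moment mulr_sumr -big_split /=; apply: eq_bigr => y _.
by rewrite big_setU1 //=; ring.
Qed.

Lemma profiled_by_subset A w (I I' : {set 'I_n}) :
  I' \subset I -> profiled_by A w I -> profiled_by A w I'.
Proof.
move=> sI'I wA y /wA [y' y'A eq_y]; exists y' => // i iI'.
exact/eq_y/(subsetP sI'I).
Qed.

Lemma profiled_by_setU1 (A : {set Y}) w a (I : {set 'I_n}) y0 :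
  y0 \in A -> profiled_by A w (a |: I) ->
  profiled_by (A :\ y0) (fun y => w y * (q a y - q a y0)) I.
Proof.
move=> y0A wA y.
rewrite mulf_eq0 negb_or subr_eq0 => /andP [/wA [y' y'A eq_y] q_ne].
exists y'; last by move=> i iI; apply/eq_y/setU1r.
rewrite !inE y'A andbT; apply: contraNneq q_ne => <-.
by rewrite eq_y ?setU11.
Qed.

Lemma moment_bound k (A : {set Y}) w (I : {set 'I_n}) (M : R) :
  (#|A| <= k)%N -> profiled_by A w I -> 0 <= M ->
  (forall T : {set 'I_n}, T \subset I -> (#|T| < k)%N -> `|moment w T| <= M) ->
  `|moment w I| <= (2 * #|I| + 1)%:R ^+ k * M.
Proof.
have [t] := ubnP #|I|; elim: t => // t IHt in k A w I M *.
rewrite ltnS => leIt leAk wA M0 small_le.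
have ge1 j (r : nat) : 1 <= (2 * r + 1)%:R ^+ j :> R.
  by rewrite exprn_ege1 // ler1n addn1.
have [ltIk | leKI] := ltnP #|I| k.
  by apply: le_trans (small_le I (subxx I) ltIk) _; rewrite ler_peMl ?ge1.
have [A0 | [y0 y0A]] := set_0Vmem A.
  rewrite (@moment_profiled_by0 _ I) ?normr0 -?A0 //.
  by rewrite mulr_ge0 // (le_trans ler01).
case: k leAk small_le leKI => [|k] leAk small_le leKI.
  by move: leAk; rewrite leqn0 cards_eq0 => /eqP A0; rewrite A0 inE in y0A.
have [a aI] : exists a, a \in I.
  by apply/set0Pn; rewrite -card_gt0 (leq_trans _ leKI).
set I' := I :\ a; set lam := q a y0.
have aI' : a \notin I' by rewrite !inE eqxx.
have defI : I = a |: I' by rewrite setD1K.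
have cardI : #|I| = #|I'|.+1 by rewrite (cardsD1 a) aI.
have sI'I : I' \subset I by rewrite subD1set.
have /andP [lam0 lam1] : 0 <= lam <= 1 by apply: q01.
have IHw : `|moment w I'| <= (2 * #|I'| + 1)%:R ^+ k.+1 * M.
  apply: (IHt _ A) => //; first by rewrite -ltnS -cardI.
    exact: profiled_by_subset wA.
  by move=> T sTI'; apply: small_le (subset_trans sTI' sI'I).
have IHw' : `|moment (fun y => w y * (q a y - lam)) I'|
    <= (2 * #|I'| + 1)%:R ^+ k * (2 * M).
  apply: (IHt _ (A :\ y0)); first by rewrite -ltnS -cardI.
  - by move: leAk; rewrite (cardsD1 y0) y0A.
  - by apply: profiled_by_setU1; rewrite // -defI.
  - by rewrite mulr_ge0.
  move=> T sTI' ltTk.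
  have aT : a \notin T by apply: contra aI'; apply: (subsetP sTI').
  rewrite -[moment _ T](addrK (lam * moment w T)) -moment_setU1 //.
  have le_aT : `|moment w (a |: T)| <= M.
    apply: small_le; last by rewrite cardsU1 aT.
    by rewrite subUset sub1set aI (subset_trans sTI' sI'I).
  have le_T : `|moment w T| <= M.
    by apply: small_le; [apply: subset_trans sTI' sI'I | apply: ltnW].
  apply: le_trans (ler_normB _ _) _; rewrite normrM (ger0_norm lam0).
  have : lam * `|moment w T| <= M by rewrite (le_trans _ le_T) // ler_piMl.
  lra.
rewrite defI (moment_setU1 _ lam) // -defI cardI.
set x : R := (2 * #|I'| + 1)%:R in IHw IHw' *.
have -> : (2 * #|I'|.+1 + 1)%:R = x + 2 by rewrite /x -addn2 !natrD natrM; ring.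
have xk_le : x ^+ k <= (x + 2) ^+ k.
  by rewrite lerXn2r ?nnegrE ?lerDl // addr_ge0.
apply: (le_trans (ler_normD _ _)); rewrite normrM (ger0_norm lam0).
apply: (@le_trans _ _ (x ^+ k * (2 * M) + x ^+ k.+1 * M)).
  apply: lerD; first exact: IHw'.
  by rewrite (le_trans _ IHw) // ler_piMl.
have -> : x ^+ k * (2 * M) + x ^+ k.+1 * M = (x + 2) * (x ^+ k * M).
  by rewrite exprS; ring.
by rewrite exprS -mulrA ler_wpM2l ?ler_wpM2r ?addr_ge0 ?ler0n.
Qed.

End Moments.

Lemma sum_cylinder_prod {R : comPzSemiRingType} {I T : finType}
    (F : I -> T -> R) (B : {set I}) (sigma : {ffun I -> T}) :
  \sum_(x : {ffun I -> T} | [forall i in B, x i == sigma i]) \prod_i F i (x i)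
  = \prod_i (if i \in B then F i (sigma i) else \sum_t F i t).
Proof.
pose c i t := (i \in B) ==> (t == sigma i).
transitivity (\prod_i \sum_t (if c i t then F i t else 0)); last first.
  apply: eq_bigr => i _; rewrite /c; case: (i \in B) => //=.
  rewrite (bigD1 (sigma i)) //= eqxx big1 ?addr0 // => t /negbTE -> //.
rewrite bigA_distr_bigA big_mkcond /=; apply: eq_bigr => x _.
case: forallP => [cx | ncx].
  by apply: eq_bigr => i _; rewrite /c; move: (cx i); case: (_ ==> _).
have [i] : exists i, ~~ c i (x i).
  apply/existsP; rewrite -negb_forall; apply/negP => /forallP cx.
  by apply: ncx => i; apply/implyP => /(implyP (cx i)).
by move=> /negbTE ci; rewrite (bigD1 i) //= ci mul0r.
Qed.

Lemma sumr_gt0 {R : numDomainType} {T : finType} (x0 : T) (F : T -> R) :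
  (forall x, 0 < F x) -> 0 < \sum_x F x.
Proof.
move=> F_gt0; rewrite (bigD1 x0) //= ltr_wpDr ?F_gt0 //.
by apply: sumr_ge0 => x _; apply/ltW/F_gt0.
Qed.

Section RBMPosterior.
Context {R : realType} {n m : nat}.
Variables (J : 'M[R]_(n, m)) (h : 'I_n -> R) (g : 'I_m -> R).
Variable sigma : obs n.

Definition local_field (i : 'I_n) (y : lat m) : R :=
  \sum_(j < m) J i j * spin R (y j) + h i.

Definition local_norm i y := expR (local_field i y) + expR (- local_field i y).

(* P(X_i = sigma_i | Y = y) *)
Definition cond_spin i y :=
  expR (spin R (sigma i) * local_field i y) / local_norm i y.

Definition latent_w (y : lat m) : R :=
  expR (\sum_(j < m) g j * spin R (y j)) * \prod_(i < n) local_norm i y.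

Definition cyl_w (B : {set 'I_n}) : R :=
  \sum_(x : obs n | [forall i in B, x i == sigma i]) marg_w J h g x.

Lemma local_norm_gt0 i y : 0 < local_norm i y.
Proof. by rewrite addr_gt0 ?expR_gt0. Qed.

Lemma cond_spin_bound i y : 0 <= cond_spin i y <= 1.
Proof.
rewrite divr_ge0 ?expR_ge0 ?(ltW (local_norm_gt0 _ _)) //=.
rewrite ler_pdivrMr ?local_norm_gt0 // mul1r /local_norm.
by case: (sigma i); rewrite /= ?mul1r ?mulN1r ?lerDl ?lerDr expR_ge0.
Qed.

Lemma joint_w_factor x y : joint_w J h g x y =
  expR (\sum_(j < m) g j * spin R (y j))
  * \prod_(i < n) expR (spin R (x i) * local_field i y).
Proof.
rewrite /joint_w -expR_sum -expRD addrC; congr expR; congr (_ + _).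
rewrite -big_split /=; apply: eq_bigr => i _.
rewrite /local_field mulrDr mulr_sumr; congr (_ + _); last by ring.
by apply: eq_bigr => j _; ring.
Qed.

Lemma cyl_w_latent B :
  cyl_w B = \sum_(y : lat m) latent_w y * \prod_(i in B) cond_spin i y.
Proof.
rewrite /cyl_w /marg_w exchange_big /=; apply: eq_bigr => y _.
under eq_bigr do rewrite joint_w_factor.
rewrite -mulr_sumr.
rewrite (sum_cylinder_prod (fun i b => expR (spin R b * local_field i y))).
rewrite -mulrA; congr (_ * _).
rewrite [X in _ * X]big_mkcond -big_split /=; apply: eq_bigr => i _.
case: (i \in B).
  by rewrite /cond_spin [RHS]mulrC divfK // gt_eqF ?local_norm_gt0.
by rewrite big_bool /= mul1r mulN1r mulr1.
Qed.

Lemma marg_w_gt0 x : 0 < marg_w J h g x.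
Proof. by apply: (sumr_gt0 [ffun => false]) => y; apply: expR_gt0. Qed.

Lemma condP_cyl A S : condP J h g A S sigma = cyl_w (A :|: S) / cyl_w S.
Proof.
have Z_neq0 : \sum_x marg_w J h g x != 0.
  by rewrite gt_eqF // (sumr_gt0 [ffun => false]) // => x; apply: marg_w_gt0.
by rewrite /condP /probA invf_div mulrA divfK.
Qed.

Variables (u : 'I_n) (S : {set 'I_n}).

Definition cond_w y := latent_w y * \prod_(i in S) cond_spin i y.

Definition post_w y := cond_w y / \sum_y' cond_w y'.

Definition cov_w y :=
  post_w y * (cond_spin u y - \sum_y' post_w y' * cond_spin u y').

Lemma cyl_w_disjoint (A : {set 'I_n}) : [disjoint A & S] ->
  cyl_w (A :|: S) = \sum_y cond_w y * \prod_(i in A) cond_spin i y.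
Proof.
move=> dAS; rewrite cyl_w_latent; apply: eq_bigr => y _.
by rewrite (eq_bigl [predU A & S]) ?bigU //= => [|i]; rewrite /cond_w ?inE; ring.
Qed.

Lemma nu_cov (T : {set 'I_n}) : u \notin T -> u \notin S -> [disjoint T & S] ->
  nu J h g u T S sigma = `|moment cond_spin cov_w T|.
Proof.
move=> uT uS dTS.
have duTS : [disjoint u |: T & S].
  by rewrite disjoints_subset subUset sub1set in_setC uS -disjoints_subset.
have Z_cyl : cyl_w S = \sum_y cond_w y.
  rewrite -[S]set0U cyl_w_disjoint ?disjoints_subset ?sub0set //.
  by apply: eq_bigr => y _; rewrite big_set0 mulr1.
rewrite /nu !condP_cyl Z_cyl !cyl_w_disjoint ?disjoints1 //.
under eq_bigr do rewrite big_setU1 //=.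
under [in X in _ - X * _]eq_bigr do rewrite big_set1.
congr `|_|; rewrite /moment /cov_w /post_w.
set Z := \sum_y cond_w y.
have -> : \sum_y cond_w y / Z * cond_spin u y
         = (\sum_y cond_w y * cond_spin u y) / Z.
  by rewrite mulr_suml; apply: eq_bigr => y _; ring.
set E := (\sum_y cond_w y * cond_spin u y) / Z.
rewrite [RHS](eq_bigr (fun y =>
    cond_w y * (cond_spin u y * \prod_(i in T) cond_spin i y) / Z
    - E * (cond_w y * \prod_(i in T) cond_spin i y / Z))); last by move=> y _; ring.
by rewrite sumrB -mulr_sumr -!mulr_suml.
Qed.

Definition latent_nbr : {set 'I_m} :=
  [set j | [exists i in mrf_nbr J h g u, J i j != 0]].

Definition latent_profiles : {set lat m} :=
  [set y | y \in pffun_on false latent_nbr predT].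

Lemma card_latent_profiles : (#|latent_profiles| <= 2 ^ rbm_s J h g)%N.
Proof.
rewrite cardsE card_pffun_on card_bool leq_pexp2l //.
exact: (leq_bigmax u).
Qed.

Lemma local_field_latent_nbr i (y : lat m) : i \in mrf_nbr J h g u ->
  local_field i [ffun j => (j \in latent_nbr) && y j] = local_field i y.
Proof.
move=> i_nbr; congr (_ + _); apply: eq_bigr => j _.
rewrite ffunE; case jN: (j \in latent_nbr) => //=.
suff -> : J i j = 0 by rewrite !mul0r.
apply/eqP; apply: contraFT jN => Jij.
by rewrite inE; apply/existsP; exists i; rewrite i_nbr Jij.
Qed.

Lemma cov_w_profiled (I : {set 'I_n}) : I \subset mrf_nbr J h g u ->
  profiled_by cond_spin latent_profiles cov_w I.
Proof.
move=> Inbr y _; exists [ffun j => (j \in latent_nbr) && y j].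
  rewrite inE; apply/pffun_onP; split=> //; apply/subsetP => j.
  by rewrite [j \in _.-support _]inE ffunE; case: (j \in latent_nbr).
move=> i iI.
by rewrite /cond_spin /local_norm local_field_latent_nbr ?(subsetP Inbr).
Qed.

Lemma nu_le_small_subsets (I : {set 'I_n}) (M : R) :
  u \notin I -> u \notin S -> [disjoint I & S] -> I \subset mrf_nbr J h g u ->
  0 <= M ->
  (forall T : {set 'I_n}, T \subset I -> (#|T| < 2 ^ rbm_s J h g)%N ->
     nu J h g u T S sigma <= M) ->
  nu J h g u I S sigma <= (2 * #|I| + 1)%:R ^+ (2 ^ rbm_s J h g) * M.
Proof.
move=> uI uS dIS Inbr M0 small_le.
have nu_covI (T : {set 'I_n}) :
    T \subset I -> nu J h g u T S sigma = `|moment cond_spin cov_w T|.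
  move=> sTI; apply: nu_cov => //; last exact: disjointWl sTI dIS.
  by apply: contra uI; apply: (subsetP sTI).
rewrite nu_covI //.
apply: (moment_bound _ cond_spin_bound _ _ _ _ _ card_latent_profiles
          (cov_w_profiled _ Inbr) M0).
by move=> T sTI ltT; rewrite -nu_covI ?small_le.
Qed.

End RBMPosterior.

Lemma rbm_constant_le1 {R : realFieldType} (a K : nat) : (0 < a)%N ->
  ((4 ^ K)%:R)^-1 * ((a%:R)^-1) ^+ (K * (K + 1)) * (2 * a + 1)%:R ^+ K <= 1 :> R.
Proof.
move=> a_gt0; rewrite exprVn -invfM -!natrX -natrM mulrC.
rewrite ler_pdivrMr ?mul1r ?ltr0n ?muln_gt0 ?expn_gt0 ?a_gt0 // ler_nat.
apply: (@leq_trans ((4 * a) ^ K)).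
  by case: K => [|K]; rewrite // leq_exp2r //; lia.
by rewrite expnMn leq_mul2l leq_pexp2l ?orbT // leq_pmulr ?addn1.
Qed.

Theorem lemma3 (R : realType) (n m : nat) (J : 'M[R]_(n, m))
  (h : 'I_n -> R) (g : 'I_m -> R)
  (u : 'I_n) (I S : {set 'I_n}) (sigma : {ffun 'I_n -> bool}) :
  u \notin I -> u \notin S -> [disjoint I & S] ->
  I != set0 -> I \subset mrf_nbr J h g u ->
  let s := rbm_s J h g in
  exists I' : {set 'I_n},
    [/\ I' \subset I, (#|I'| <= 2 ^ s)%N &
      nu J h g u I' S sigma >=
        ((4 ^ (2 ^ s))%:R)^-1 * ((#|I|%:R)^-1) ^+ (2 ^ s * (2 ^ s + 1))
        * nu J h g u I S sigma].
Proof.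
move=> uI uS dIS I0 Inbr s.
pose small (T : {set 'I_n}) := (T \subset I) && (#|T| < 2 ^ s)%N.
have small0 : small set0 by rewrite /small sub0set cards0 expn_gt0.
have [T /andP [sTI ltT] T_max] := arg_maxP (fun T => nu J h g u T S sigma) small0.
exists T; split => //; first exact: ltnW.
have nuI_le : nu J h g u I S sigma
              <= (2 * #|I| + 1)%:R ^+ (2 ^ s) * nu J h g u T S sigma.
  apply: nu_le_small_subsets => // [|T' sT'I ltT']; first exact: normr_ge0.
  by apply: T_max; rewrite /small sT'I.
rewrite -[leRHS]mul1r; apply: le_trans (ler_wpM2l _ nuI_le) _.
  by rewrite mulr_ge0 ?exprn_ge0 ?invr_ge0 ?ler0n.
rewrite mulrA ler_wpM2r ?normr_ge0 // rbm_constant_le1 // card_gt0 //.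
Qed.
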